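(* Let $\mathcal{U}$ be the map $(\beta,u)\mapsto\mathcal{U}(\beta,u)=\int_0^1\mathcal{K}(\beta)(1-y)u(y)\,dy\in\mathbb{R}$, defined on pairs $(\beta,u)$ of continuous functions on $[0,1]$. For arbitrary $B_\beta,B_u>0$, $\mathcal U$ is Lipschitz on the set of pairs of Lipschitz functions with $\|\beta\|_\infty\le B_\beta$, $\|u\|_\infty\le B_u$: for any two such pairs, $$|\mathcal U(\beta_1,u_1)-\mathcal U(\beta_2,u_2)|\le\big(B_\beta e^{B_\beta}+B_ue^{3B_\beta}\big)\,\|(\beta_1-\beta_2,u_1-u_2)\|_\infty,$$ where $\|(a,b)\|_\infty=\max(\|a\|_\infty,\|b\|_\infty)$.
   Context: The backstepping kernel operator $\mathcal{K}$ maps $\beta\in C^0[0,1]$ to the solution $k$ of $k(x)=-\beta(x)+\int_0^x\beta(x-y)k(y)\,dy$, $x\in[0,1]$. $\|\cdot\|_\infty$ is the supremum norm on $[0,1]$. *)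

From Stdlib Require Import Reals ClassicalEpsilon.
From Coquelicot Require Import Coquelicot.
Open Scope R_scope.

Definition I01 (x : R) : Prop := 0 <= x <= 1.

Definition cont01 (f : R -> R) : Prop :=
  forall x, I01 x -> filterlim f (within I01 (locally x)) (locally (f x)).

Definition lip01 (f : R -> R) : Prop :=
  exists L : R, forall x y, I01 x -> I01 y -> Rabs (f x - f y) <= L * Rabs (x - y).

Definition supn (f : R -> R) : R :=
  real (Lub_Rbar (fun r => exists x, I01 x /\ r = Rabs (f x))).

Definition kernel_sol (beta k : R -> R) : Prop :=
  cont01 k /\
  forall x, I01 x -> k x = - beta x + RInt (fun y => beta (x - y) * k y) 0 x.

Definition Kop (beta : R -> R) : R -> R :=
  epsilon (inhabits (fun _ : R => 0)) (kernel_sol beta).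

Definition Uop (beta u : R -> R) : R :=
  RInt (fun y => Kop beta (1 - y) * u y) 0 1.

(* For a continuous Lipschitz kernel [beta] the kernel equation is solved by Picard
   iteration: in the weighted norm sup |k x| exp (-2 (B + 1) x) each step halves the
   distance between iterates, and the iterates are uniformly Lipschitz, so their
   pointwise limit is a continuous solution.  Hence
   |K(b1)| <= B e^B and |K(b1) - K(b2)| <= e^(3B) |b1 - b2|, and splitting
   k1 u1 - k2 u2 = k1 (u1 - u2) + (k1 - k2) u2 under the integral gives the bound. *)

From Stdlib Require Import Reals Lra Lia ClassicalEpsilon.
From Coquelicot Require Import Coquelicot.
Open Scope R_scope.

(* Coquelicot states the following for arbitrary normed modules, whose operations do not
   unify syntactically with those of R. *)
Lemma continuous_Rplus (f g : R -> R) x :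
  continuous f x -> continuous g x -> continuous (fun y => f y + g y) x.
Proof. apply (continuous_plus f g). Qed.

Lemma continuous_Rminus (f g : R -> R) x :
  continuous f x -> continuous g x -> continuous (fun y => f y - g y) x.
Proof. apply (continuous_minus f g). Qed.

Lemma continuous_Rmult (f g : R -> R) x :
  continuous f x -> continuous g x -> continuous (fun y => f y * g y) x.
Proof. apply (continuous_mult f g). Qed.

Ltac solve_continuous :=
  intros;
  repeat match goal with
  | H : forall z, continuous ?f z |- continuous ?f _ => apply H
  | |- continuous (fun _ => ?c) _ => apply continuous_const
  | |- continuous (fun y => y) _ => apply continuous_id
  | |- continuous exp _ => apply continuous_exp
  | |- continuous (fun y => @?f y - @?g y) _ => apply (continuous_Rminus f g)
  | |- continuous (fun y => @?f y + @?g y) _ => apply (continuous_Rplus f g)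
  | |- continuous (fun y => @?f y * @?g y) _ => apply (continuous_Rmult f g)
  | |- continuous (fun y => Rabs (@?f y)) _ => apply (continuous_Rabs_comp f)
  | |- continuous (fun y => ?f (@?g y)) _ => apply (continuous_comp g f)
  end.

Lemma ex_RInt_continuous_R (f : R -> R) a b :
  (forall x, continuous f x) -> ex_RInt f a b.
Proof. intros Hf. apply (ex_RInt_continuous (V := R_CompleteNormedModule)); auto. Qed.

Lemma RInt_Rext (f g : R -> R) a b :
  (forall x, Rmin a b < x < Rmax a b -> f x = g x) -> RInt f a b = RInt g a b.
Proof. apply RInt_ext. Qed.

Lemma ex_RInt_Rminus (f g : R -> R) a b :
  ex_RInt f a b -> ex_RInt g a b -> ex_RInt (fun x => f x - g x) a b.
Proof. apply (ex_RInt_minus f g). Qed.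

Lemma RInt_Rminus (f g : R -> R) a b : ex_RInt f a b -> ex_RInt g a b ->
  RInt (fun x => f x - g x) a b = RInt f a b - RInt g a b.
Proof. apply (RInt_minus f g). Qed.

Lemma RInt_Rplus (f g : R -> R) a b : ex_RInt f a b -> ex_RInt g a b ->
  RInt (fun x => f x + g x) a b = RInt f a b + RInt g a b.
Proof. apply (RInt_plus f g). Qed.

Lemma RInt_Rscal (f : R -> R) a b c : ex_RInt f a b ->
  RInt (fun x => c * f x) a b = c * RInt f a b.
Proof. apply (RInt_scal f). Qed.

Lemma RInt_Rconst a b c : RInt (fun _ => c) a b = (b - a) * c.
Proof. apply (RInt_const a b c). Qed.

Lemma abs_RInt_le_RInt (f g : R -> R) a b : a <= b -> ex_RInt f a b -> ex_RInt g a b ->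
  (forall x, a < x < b -> Rabs (f x) <= g x) -> Rabs (RInt f a b) <= RInt g a b.
Proof.
  intros Hab Hf Hg Hfg.
  assert (Hup : RInt f a b <= RInt g a b).
  { apply RInt_le; auto. intros x Hx. specialize (Hfg x Hx).
    pose proof (Rle_abs (f x)); lra. }
  assert (Hlow : RInt (fun x => - g x) a b <= RInt f a b).
  { apply RInt_le; auto.
    - apply (ex_RInt_opp g); auto.
    - intros x Hx. specialize (Hfg x Hx).
      pose proof (Rle_abs (- f x)). rewrite Rabs_Ropp in *. lra. }
  rewrite (RInt_opp g) in Hlow by auto.
  apply Rabs_le. change (opp (RInt g a b)) with (- RInt g a b) in Hlow. lra.
Qed.

Lemma RInt_exp_mult c X : 0 < c -> RInt (fun y => exp (c * y)) 0 X = (exp (c * X) - 1) / c.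
Proof.
  intros Hc. apply is_RInt_unique.
  replace ((exp (c * X) - 1) / c) with (minus (exp (c * X) / c) (exp (c * 0) / c))
    by (unfold minus, plus, opp; simpl; rewrite Rmult_0_r, exp_0; field; lra).
  apply (is_RInt_derive (fun y => exp (c * y) / c)).
  - intros y _. auto_derive; auto. field. lra.
  - solve_continuous.
Qed.

Lemma exp_le_compat x y : x <= y -> exp x <= exp y.
Proof.
  intros [Hlt | ->]; [left; apply exp_increasing; exact Hlt | right; reflexivity].
Qed.

Lemma one_plus_mul_exp_le B : 0 <= B -> 1 + B * exp B <= exp (2 * B).
Proof.
  intros HB. replace (2 * B) with (B + B) by ring. rewrite exp_plus.
  pose proof (exp_ineq1_le B). pose proof (exp_pos B). nra.
Qed.

Lemma lipschitz_continuous (f : R -> R) L :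
  (forall x y, Rabs (f x - f y) <= L * Rabs (x - y)) -> forall x, continuous f x.
Proof.
  intros Hf x. apply continuity_pt_filterlim.
  intros eps Heps.
  assert (HL : 0 < Rabs L + 1) by (pose proof (Rabs_pos L); lra).
  exists (eps / (Rabs L + 1)). split; [apply Rdiv_lt_0_compat; lra |].
  intros y [_ Hy]. simpl in *. unfold R_dist in *.
  apply Rle_lt_trans with ((Rabs L + 1) * Rabs (y - x)).
  - pose proof (Hf y x). pose proof (Rle_abs L). pose proof (Rabs_pos (y - x)). nra.
  - apply (Rmult_lt_compat_l (Rabs L + 1)) in Hy; auto.
    replace ((Rabs L + 1) * (eps / (Rabs L + 1))) with eps in Hy by (field; lra). exact Hy.
Qed.

Lemma gronwall (phi : R -> R) a b x :
  (forall y, continuous phi y) -> 0 <= b -> 0 <= x ->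
  (forall y, 0 <= y <= x -> phi y <= a + b * RInt phi 0 y) ->
  phi x <= a * exp (b * x).
Proof.
  intros Hphi Hb Hx Hle.
  set (Phi := fun y => RInt phi 0 y).
  (* [G] is nonincreasing on [0, x] because [phi <= a + b Phi] there, and [G 0 = a]. *)
  set (G := fun y => exp (- b * y) * (a + b * Phi y)).
  assert (HPhi : forall y, is_derive Phi y (phi y)).
  { intros y. apply is_derive_RInt with 0; [| apply Hphi].
    apply filter_forall. intros t. apply RInt_correct, ex_RInt_continuous_R, Hphi. }
  assert (HG : forall y, is_derive G y (b * exp (- b * y) * (phi y - (a + b * Phi y)))).
  { intros y. unfold G. auto_derive.
    - exists (phi y); apply HPhi.
    - replace (Derive (fun t : R => Phi t) y) with (phi y)
        by (symmetry; apply is_derive_unique, HPhi).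
      ring. }
  destruct (MVT_gen G 0 x _ (fun y _ => HG y)) as [c [Hc HGx]].
  { intros y _. apply continuity_pt_filterlim, (ex_derive_continuous (V := R_NormedModule)).
    eexists; apply HG. }
  rewrite Rmin_left, Rmax_right in Hc by lra.
  assert (HG0 : G 0 = a).
  { unfold G, Phi. rewrite RInt_point, Rmult_0_r, exp_0. unfold zero; simpl. ring. }
  assert (HGc : b * exp (- b * c) * (phi c - (a + b * Phi c)) <= 0).
  { assert (0 <= b * exp (- b * c)) by (apply Rmult_le_pos; [lra | left; apply exp_pos]).
    specialize (Hle c Hc). change (RInt phi 0 c) with (Phi c) in Hle. nra. }
  assert (HGa : G x <= a).
  { cbv beta in HGx. rewrite HG0 in HGx. nra. }
  assert (Hexp : exp (b * x) * exp (- b * x) = 1)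
    by (rewrite <- exp_plus; replace (b * x + - b * x) with 0 by ring; apply exp_0).
  apply Rle_trans with (a + b * Phi x); [apply Hle; lra |].
  replace (a + b * Phi x) with (exp (b * x) * G x)
    by (unfold G; rewrite <- Rmult_assoc, Hexp; ring).
  rewrite (Rmult_comm a). apply Rmult_le_compat_l; [left; apply exp_pos | exact HGa].
Qed.

Definition clamp01 (x : R) : R := Rmax 0 (Rmin 1 x).

Definition ext01 (f : R -> R) (x : R) : R := f (clamp01 x).

Lemma I01_clamp01 x : I01 (clamp01 x).
Proof. unfold clamp01, I01, Rmax, Rmin; repeat destruct Rle_dec; lra. Qed.

Lemma clamp01_id x : I01 x -> clamp01 x = x.
Proof. unfold clamp01, I01, Rmax, Rmin; repeat destruct Rle_dec; lra. Qed.

Lemma clamp01_lip x y : Rabs (clamp01 x - clamp01 y) <= Rabs (x - y).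
Proof.
  unfold clamp01, Rmax, Rmin; repeat destruct Rle_dec; unfold Rabs; repeat destruct Rcase_abs; lra.
Qed.

Lemma ext01_id f x : I01 x -> ext01 f x = f x.
Proof. intros Hx. unfold ext01. rewrite clamp01_id; auto. Qed.

Lemma continuous_ext01 f : cont01 f -> forall x, continuous (ext01 f) x.
Proof.
  intros Hf x. unfold ext01.
  apply (filterlim_comp _ _ _ clamp01 f _ (within I01 (locally (clamp01 x)))).
  - intros P HP. apply (lipschitz_continuous clamp01 1) in HP.
    + unfold filtermap in *. eapply filter_imp; [| exact HP]. intros y Hy. apply Hy, I01_clamp01.
    + intros y z. rewrite Rmult_1_l. apply clamp01_lip.
  - apply Hf, I01_clamp01.
Qed.

Lemma continuous_cont01 f : (forall x, continuous f x) -> cont01 f.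
Proof. intros Hf x _. eapply filterlim_filter_le_1; [apply filter_le_within | apply Hf]. Qed.

Lemma Rabs_le_supn_of_bounded f M x :
  (forall z, I01 z -> Rabs (f z) <= M) -> I01 x -> Rabs (f x) <= supn f.
Proof.
  intros HM Hx. unfold supn.
  set (E := fun r => exists z, I01 z /\ r = Rabs (f z)).
  destruct (Lub_Rbar_correct E) as [Hub Hlub].
  assert (Hfx : Rbar_le (Rabs (f x)) (Lub_Rbar E)) by (apply Hub; exists x; auto).
  assert (Hbnd : Rbar_le (Lub_Rbar E) M) by (apply Hlub; intros r [z [Hz ->]]; apply HM, Hz).
  destruct (Lub_Rbar E); simpl in *; tauto.
Qed.

Lemma Rabs_le_supn f x : cont01 f -> I01 x -> Rabs (f x) <= supn f.
Proof.
  intros Hf.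
  destruct (continuity_ab_maj (fun y => Rabs (ext01 f y)) 0 1) as [m [Hm _]]; [lra | |].
  { intros y _. apply continuity_pt_filterlim, continuous_Rabs_comp, continuous_ext01, Hf. }
  apply (Rabs_le_supn_of_bounded f (Rabs (ext01 f m))).
  intros z Hz. rewrite <- (ext01_id f z Hz). apply Hm, Hz.
Qed.

Lemma Rabs_le_of_supn_le f M : cont01 f -> supn f <= M -> forall z, I01 z -> Rabs (f z) <= M.
Proof. intros Hf HM z Hz. eapply Rle_trans; [apply Rabs_le_supn |]; eauto. Qed.

Lemma Rabs_sub_le_supn f g M :
  (forall z, I01 z -> Rabs (f z) <= M) -> (forall z, I01 z -> Rabs (g z) <= M) ->
  forall z, I01 z -> Rabs (f z - g z) <= supn (fun x => f x - g x).
Proof.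
  intros Hf Hg z Hz. apply (Rabs_le_supn_of_bounded (fun x => f x - g x) (M + M)); auto.
  intros w Hw. eapply Rle_trans; [apply Rabs_triang |]. rewrite Rabs_Ropp.
  apply Rplus_le_compat; auto.
Qed.

Lemma nonneg_of_Rabs_le (f : R -> R) M : (forall z, I01 z -> Rabs (f z) <= M) -> 0 <= M.
Proof. intros Hf. apply Rle_trans with (Rabs (f 0)); [apply Rabs_pos | apply Hf; red; lra]. Qed.

Lemma geometric_increments (u : nat -> R) A :
  (forall n, Rabs (u (S n) - u n) <= A * (/2) ^ n) ->
  forall n p, Rabs (u (n + p)%nat - u n) <= 2 * A * (/2) ^ n.
Proof.
  intros Hu n p.
  assert (Hsum : Rabs (u (n + p)%nat - u n) <= 2 * A * ((/2) ^ n - (/2) ^ (n + p))).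
  { induction p as [| p IH].
    - rewrite Nat.add_0_r, Rminus_diag, Rabs_R0. lra.
    - rewrite Nat.add_succ_r.
      replace (u (S (n + p)) - u n) with ((u (S (n + p)) - u (n + p)%nat) + (u (n + p)%nat - u n))
        by ring.
      eapply Rle_trans; [apply Rabs_triang |].
      pose proof (Hu (n + p)%nat). simpl pow. lra. }
  assert (0 <= A * (/2) ^ (n + p)) by (eapply Rle_trans; [apply Rabs_pos | apply Hu]).
  lra.
Qed.

Lemma geometric_cvg (u : nat -> R) A :
  (forall n, Rabs (u (S n) - u n) <= A * (/2) ^ n) ->
  is_lim_seq u (real (Lim_seq u)) /\
  forall n, Rabs (real (Lim_seq u) - u n) <= 2 * A * (/2) ^ n.
Proof.
  intros Hu.
  pose proof (geometric_increments u A Hu) as Hinc.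
  assert (HA : 0 <= A)
    by (specialize (Hu O); simpl in Hu; pose proof (Rabs_pos (u 1%nat - u O)); lra).
  assert (Hcvg : is_lim_seq u (real (Lim_seq u))).
  { apply Lim_seq_correct', ex_lim_seq_cauchy_corr. intros eps.
    destruct (pow_lt_1_zero (/2) ltac:(rewrite Rabs_right; lra) (eps / (4 * A + 1)))
      as [N HN]; [apply Rdiv_lt_0_compat; [apply cond_pos | lra] |].
    exists N. intros n m Hn Hm.
    specialize (HN N (le_n N)). rewrite Rabs_right in HN by (apply Rle_ge, pow_le; lra).
    replace n with (N + (n - N))%nat by lia. replace m with (N + (m - N))%nat by lia.
    replace (u (N + (n - N))%nat - u (N + (m - N))%nat)
      with ((u (N + (n - N))%nat - u N) - (u (N + (m - N))%nat - u N)) by ring.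
    eapply Rle_lt_trans; [apply Rabs_triang |]. rewrite Rabs_Ropp.
    pose proof (Hinc N (n - N)%nat). pose proof (Hinc N (m - N)%nat).
    apply (Rmult_lt_compat_l (4 * A + 1)) in HN; [| lra].
    replace ((4 * A + 1) * (eps / (4 * A + 1))) with (pos eps) in HN by (field; lra).
    assert (0 <= (/2) ^ N) by (apply pow_le; lra). nra. }
  split; [exact Hcvg |]. intros n.
  assert (Hle := is_lim_seq_le_loc (fun m => Rabs (u m - u n)) (fun _ => 2 * A * (/2) ^ n)
     (Rabs (Lim_seq u - u n)) (2 * A * (/2) ^ n)).
  apply Hle.
  - exists n. intros m Hm. replace m with (n + (m - n))%nat by lia. apply Hinc.
  - apply (is_lim_seq_abs _ (Finite (Lim_seq u - u n))).
    apply is_lim_seq_minus'; [exact Hcvg | apply is_lim_seq_const].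
  - apply is_lim_seq_const.
Qed.

Lemma Rabs_le_geometric_eq0 r A : (forall n, Rabs r <= A * (/2) ^ n) -> r = 0.
Proof.
  intros Hr. apply Rabs_eq_0, Rle_antisym; [| apply Rabs_pos].
  rewrite <- (Rmult_0_r A).
  apply (is_lim_seq_le (fun _ => Rabs r) (fun n => A * (/2) ^ n) (Rabs r) (Rbar_mult A 0)); auto.
  - apply is_lim_seq_const.
  - apply is_lim_seq_scal_l, is_lim_seq_geom. rewrite Rabs_right; lra.
Qed.

Lemma is_lim_seq_lipschitz (f : nat -> R -> R) (g : R -> R) L :
  (forall n x y, Rabs (f n x - f n y) <= L * Rabs (x - y)) ->
  (forall x, is_lim_seq (fun n => f n x) (g x)) ->
  forall x y, Rabs (g x - g y) <= L * Rabs (x - y).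
Proof.
  intros Hf Hg x y.
  apply (is_lim_seq_le (fun n => Rabs (f n x - f n y)) (fun _ => L * Rabs (x - y))
           (Rabs (g x - g y)) (L * Rabs (x - y))); auto.
  - apply (is_lim_seq_abs _ (Finite (g x - g y))), is_lim_seq_minus'; apply Hg.
  - apply is_lim_seq_const.
Qed.

Definition volterra_eq (b k : R -> R) : Prop :=
  forall x, I01 x -> k x = - b x + RInt (fun y => b (x - y) * k y) 0 x.

Lemma volterra_eq_agree b b' k k' :
  (forall x, I01 x -> b x = b' x) -> (forall x, I01 x -> k x = k' x) ->
  volterra_eq b k -> volterra_eq b' k'.
Proof.
  intros Hb Hk Hbk x Hx. rewrite <- Hb, <- Hk, Hbk by auto. f_equal.
  destruct Hx as [Hx0 Hx1].
  apply RInt_Rext. rewrite Rmin_left, Rmax_right by lra. intros y Hy.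
  rewrite Hb, Hk; auto; red; lra.
Qed.

Section VolterraDiff.
Variables (b1 b2 k1 k2 : R -> R) (B d K : R).
Hypotheses (b1_cont : forall x, continuous b1 x) (b2_cont : forall x, continuous b2 x)
           (k1_cont : forall x, continuous k1 x) (k2_cont : forall x, continuous k2 x).
Hypotheses (k1_eq : volterra_eq b1 k1) (k2_eq : volterra_eq b2 k2).
Hypothesis b2_bound : forall z, I01 z -> Rabs (b2 z) <= B.
Hypothesis b12_bound : forall z, I01 z -> Rabs (b1 z - b2 z) <= d.
Hypothesis k1_bound : forall z, I01 z -> Rabs (k1 z) <= K.

Let phi y := Rabs (k1 y - k2 y).

Lemma volterra_eq_diff_integral x : I01 x ->
  phi x <= d * (1 + K) + B * RInt phi 0 x.
Proof.
  intros Hx. destruct Hx as [Hx0 Hx1].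
  pose proof (nonneg_of_Rabs_le _ _ b12_bound) as Hd.
  pose proof (nonneg_of_Rabs_le _ _ k1_bound) as HK.
  unfold phi at 1. rewrite k1_eq, k2_eq by (red; lra).
  set (I1 := RInt (fun y => b1 (x - y) * k1 y) 0 x).
  set (I2 := RInt (fun y => b2 (x - y) * k2 y) 0 x).
  assert (Hint : Rabs (I1 - I2) <= RInt (fun y => d * K + B * phi y) 0 x).
  { unfold I1, I2. rewrite <- RInt_Rminus by (apply ex_RInt_continuous_R; solve_continuous).
    apply abs_RInt_le_RInt; auto; try (apply ex_RInt_continuous_R; unfold phi; solve_continuous).
    intros y Hy.
    replace (b1 (x - y) * k1 y - b2 (x - y) * k2 y)
      with ((b1 (x - y) - b2 (x - y)) * k1 y + b2 (x - y) * (k1 y - k2 y)) by ring.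
    eapply Rle_trans; [apply Rabs_triang |]. rewrite !Rabs_mult.
    apply Rplus_le_compat; [apply Rmult_le_compat | apply Rmult_le_compat_r];
      try apply Rabs_pos; first [apply b12_bound | apply k1_bound | apply b2_bound]; red; lra. }
  rewrite RInt_Rplus, RInt_Rconst, RInt_Rscal in Hint
    by (apply ex_RInt_continuous_R; unfold phi; solve_continuous).
  replace (- b1 x + I1 - (- b2 x + I2)) with (- (b1 x - b2 x) + (I1 - I2)) by ring.
  eapply Rle_trans; [apply Rabs_triang |]. rewrite Rabs_Ropp.
  assert (Rabs (b1 x - b2 x) <= d) by (apply b12_bound; red; lra).
  assert (0 <= d * K) by (apply Rmult_le_pos; auto).
  assert ((x - 0) * (d * K) <= d * K) by nra.
  lra.
Qed.

Lemma volterra_eq_diff x : I01 x -> Rabs (k1 x - k2 x) <= d * (1 + K) * exp (B * x).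
Proof.
  intros Hx. destruct Hx as [Hx0 Hx1]. apply (gronwall phi).
  - unfold phi; solve_continuous.
  - exact (nonneg_of_Rabs_le _ _ b2_bound).
  - exact Hx0.
  - intros y Hy. apply volterra_eq_diff_integral. red; lra.
Qed.

End VolterraDiff.

Section Picard.
Variables (b : R -> R) (B L : R).
Hypothesis b_cont : forall x, continuous b x.
Hypothesis b_bound : forall x, Rabs (b x) <= B.
Hypothesis b_lip : forall x y, Rabs (b x - b y) <= L * Rabs (x - y).

Let B_ge0 : 0 <= B := Rle_trans _ _ _ (Rabs_pos (b 0)) (b_bound 0).

Let L_ge0 : 0 <= L.
Proof.
  pose proof (b_lip 1 0) as H. rewrite Rminus_0_r, Rabs_R1, Rmult_1_r in H.
  pose proof (Rabs_pos (b 1 - b 0)). lra.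
Qed.

Definition volterra (k : R -> R) (x : R) : R := RInt (fun y => b (x - y) * k y) 0 x.

(* Clamping makes [picard k] Lipschitz on all of R, so the iterates are continuous everywhere. *)
Definition picard (k : R -> R) (x : R) : R := - b x + volterra k (clamp01 x).

Fixpoint picard_iter (n : nat) : R -> R :=
  match n with
  | O => fun _ => 0
  | S n => picard (picard_iter n)
  end.

Definition picard_lim (x : R) : R := real (Lim_seq (fun n => picard_iter n x)).

Lemma volterra_sub_le k K x x' :
  (forall x, continuous k x) -> (forall y, I01 y -> Rabs (k y) <= K) ->
  I01 x -> I01 x' -> x' <= x ->
  Rabs (volterra k x - volterra k x') <= (B + L) * K * (x - x').
Proof.
  intros Hk HK [Hx0 Hx1] [Hx'0 Hx'1] Hxx'.
  pose proof (nonneg_of_Rabs_le _ _ HK) as HK0.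
  assert (Hsplit : volterra k x - volterra k x' =
    RInt (fun y => (b (x - y) - b (x' - y)) * k y) 0 x' + RInt (fun y => b (x - y) * k y) x' x).
  { unfold volterra.
    rewrite <- (RInt_Chasles (fun y => b (x - y) * k y) 0 x' x)
      by (apply ex_RInt_continuous_R; solve_continuous).
    change (plus ?u ?v) with (u + v).
    rewrite (RInt_Rext (fun y => (b (x - y) - b (x' - y)) * k y)
                      (fun y => b (x - y) * k y - b (x' - y) * k y)) by (intros; ring).
    rewrite RInt_Rminus by (apply ex_RInt_continuous_R; solve_continuous). ring. }
  rewrite Hsplit.
  eapply Rle_trans; [apply Rabs_triang |].
  eapply Rle_trans; [apply Rplus_le_compat;
    [ apply abs_RInt_le_const with (M := L * (x - x') * K)
    | apply abs_RInt_le_const with (M := B * K) ] |].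
  - exact Hx'0.
  - apply ex_RInt_continuous_R; solve_continuous.
  - intros t Ht. rewrite Rabs_mult. apply Rmult_le_compat; try apply Rabs_pos.
    + replace (x - x') with (Rabs ((x - t) - (x' - t))) by (rewrite Rabs_right; lra). apply b_lip.
    + apply HK. red; lra.
  - exact Hxx'.
  - apply ex_RInt_continuous_R; solve_continuous.
  - intros t Ht. rewrite Rabs_mult. apply Rmult_le_compat; try apply Rabs_pos; auto.
    apply HK. red; lra.
  - assert (0 <= L * (x - x') * K) by (repeat apply Rmult_le_pos; lra). nra.
Qed.

Lemma volterra_lip k K : (forall x, continuous k x) -> (forall y, I01 y -> Rabs (k y) <= K) ->
  forall x x', I01 x -> I01 x' ->
  Rabs (volterra k x - volterra k x') <= (B + L) * K * Rabs (x - x').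
Proof.
  intros Hk HK x x' Hx Hx'. destruct (Rle_dec x' x) as [Hxx' | Hxx'].
  - rewrite (Rabs_right (x - x')) by lra. apply volterra_sub_le; auto.
  - rewrite Rabs_minus_sym, (Rabs_minus_sym x), (Rabs_right (x' - x)) by lra.
    apply volterra_sub_le; auto. lra.
Qed.

Lemma picard_lip k K : (forall x, continuous k x) -> (forall y, I01 y -> Rabs (k y) <= K) ->
  forall x x', Rabs (picard k x - picard k x') <= (L + (B + L) * K) * Rabs (x - x').
Proof.
  intros Hk HK x x'. unfold picard.
  pose proof (nonneg_of_Rabs_le _ _ HK) as HK0.
  replace (- b x + volterra k (clamp01 x) - (- b x' + volterra k (clamp01 x')))
    with (- (b x - b x') + (volterra k (clamp01 x) - volterra k (clamp01 x'))) by ring.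
  eapply Rle_trans; [apply Rabs_triang |]. rewrite Rabs_Ropp.
  pose proof (b_lip x x').
  pose proof (volterra_lip k K Hk HK _ _ (I01_clamp01 x) (I01_clamp01 x')).
  assert ((B + L) * K * Rabs (clamp01 x - clamp01 x') <= (B + L) * K * Rabs (x - x'))
    by (apply Rmult_le_compat_l; [apply Rmult_le_pos | apply clamp01_lip]; lra).
  lra.
Qed.

Lemma picard_sub k1 k0 x : (forall x, continuous k1 x) -> (forall x, continuous k0 x) ->
  picard k1 x - picard k0 x = volterra (fun y => k1 y - k0 y) (clamp01 x).
Proof.
  intros Hk1 Hk0. unfold picard, volterra.
  rewrite (RInt_Rext (fun y => b (clamp01 x - y) * (k1 y - k0 y))
                     (fun y => b (clamp01 x - y) * k1 y - b (clamp01 x - y) * k0 y))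
    by (intros; ring).
  rewrite RInt_Rminus by (apply ex_RInt_continuous_R; solve_continuous). ring.
Qed.

(* In the norm sup_x |k x| exp (- c x) the map picard is a contraction of ratio 1/2. *)
Let c := 2 * (B + 1).

Lemma picard_contraction k1 k0 M : (forall x, continuous k1 x) -> (forall x, continuous k0 x) ->
  (forall y, I01 y -> Rabs (k1 y - k0 y) <= M * exp (c * y)) ->
  forall x, Rabs (picard k1 x - picard k0 x) <= M / 2 * exp (c * clamp01 x).
Proof.
  intros Hk1 Hk0 HM x.
  assert (HM0 : 0 <= M).
  { specialize (HM 0 ltac:(red; lra)). rewrite Rmult_0_r, exp_0, Rmult_1_r in HM.
    pose proof (Rabs_pos (k1 0 - k0 0)); lra. }
  rewrite picard_sub by auto. unfold volterra.
  destruct (I01_clamp01 x) as [HX0 HX1]. set (X := clamp01 x) in *.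
  eapply Rle_trans; [apply abs_RInt_le_RInt with (g := fun y => B * (M * exp (c * y)))|].
  - exact HX0.
  - apply ex_RInt_continuous_R; solve_continuous.
  - apply ex_RInt_continuous_R; solve_continuous.
  - intros y Hy. rewrite Rabs_mult.
    apply Rmult_le_compat; try apply Rabs_pos; auto. apply HM. red; lra.
  - assert (Hc : 0 < c) by (unfold c; lra).
    rewrite !RInt_Rscal, RInt_exp_mult by (auto; apply ex_RInt_continuous_R; solve_continuous).
    set (e := exp (c * X)). set (t := (e - 1) / c).
    assert (He : 1 <= e) by (pose proof (exp_ineq1_le (c * X)); unfold e; nra).
    assert (Ht : t * c = e - 1) by (unfold t; field; lra).
    assert (Ht0 : 0 <= t) by (unfold t; apply Rdiv_le_0_compat; lra).
    assert (HBt : B * t <= e / 2) by (unfold c in Ht; nra).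
    replace (M / 2 * e) with (M * (e / 2)) by field.
    replace (B * (M * t)) with (M * (B * t)) by ring.
    apply Rmult_le_compat_l; auto.
Qed.

Lemma picard_iter_continuous n : forall x, continuous (picard_iter n) x.
Proof.
  induction n as [| n IH]; simpl.
  - intros; apply continuous_const.
  - apply (lipschitz_continuous _ _ (picard_lip _ (supn (picard_iter n)) IH
             (fun y Hy => Rabs_le_supn _ y (continuous_cont01 _ IH) Hy))).
Qed.

Lemma picard_iter_step n x :
  Rabs (picard_iter (S n) x - picard_iter n x) <= B * (/2) ^ n * exp (c * clamp01 x).
Proof.
  revert x. induction n as [| n IH]; intros x.
  - simpl. unfold picard, volterra.
    rewrite (RInt_Rext _ (fun _ => 0)) by (intros; ring).
    rewrite RInt_Rconst, Rmult_0_r, Rplus_0_r, Rminus_0_r, Rabs_Ropp, Rmult_1_r.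
    destruct (I01_clamp01 x).
    pose proof (exp_ineq1_le (c * clamp01 x)). pose proof (b_bound x).
    assert (0 <= c * clamp01 x) by (unfold c; apply Rmult_le_pos; lra). nra.
  - change (picard_iter (S (S n)) x - picard_iter (S n) x)
      with (picard (picard_iter (S n)) x - picard (picard_iter n) x).
    replace (B * (/2) ^ S n) with (B * (/2) ^ n / 2) by (simpl; field).
    apply picard_contraction; try apply picard_iter_continuous.
    intros y Hy. rewrite <- (clamp01_id y Hy) at 3. apply IH.
Qed.

Lemma picard_iter_increment n x :
  Rabs (picard_iter (S n) x - picard_iter n x) <= B * exp c * (/2) ^ n.
Proof.
  eapply Rle_trans; [apply picard_iter_step |].
  destruct (I01_clamp01 x).
  assert (exp (c * clamp01 x) <= exp c) by (apply exp_le_compat; unfold c; nra).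
  assert (0 <= B * (/2) ^ n) by (apply Rmult_le_pos; [| apply pow_le]; lra).
  nra.
Qed.

Let C := 2 * (B * exp c).

Let C_ge0 : 0 <= C.
Proof. apply Rmult_le_pos; [lra | apply Rmult_le_pos; [exact B_ge0 | left; apply exp_pos]]. Qed.

Lemma picard_lim_spec x :
  is_lim_seq (fun n => picard_iter n x) (picard_lim x) /\
  forall n, Rabs (picard_lim x - picard_iter n x) <= C * (/2) ^ n.
Proof. apply geometric_cvg. intros n. apply picard_iter_increment. Qed.

Lemma picard_iter_bound n x : Rabs (picard_iter n x) <= C.
Proof.
  pose proof (geometric_increments (fun m => picard_iter m x) _
                (fun m => picard_iter_increment m x) O n) as H.
  simpl in H. rewrite Rminus_0_r, Rmult_1_r in H. exact H.
Qed.

Let Lambda := L + (B + L) * C.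

Lemma picard_iter_lip n x y : Rabs (picard_iter n x - picard_iter n y) <= Lambda * Rabs (x - y).
Proof.
  destruct n as [| n]; simpl.
  - rewrite Rminus_0_r, Rabs_R0. apply Rmult_le_pos; [| apply Rabs_pos].
    unfold Lambda. pose proof C_ge0. nra.
  - apply picard_lip; [apply picard_iter_continuous | intros; apply picard_iter_bound].
Qed.

Lemma picard_lim_continuous x : continuous picard_lim x.
Proof.
  apply (lipschitz_continuous _ Lambda).
  apply (is_lim_seq_lipschitz picard_iter); [apply picard_iter_lip |].
  intros z; apply picard_lim_spec.
Qed.

Lemma picard_lim_fixed x : picard_lim x = picard picard_lim x.
Proof.
  pose proof C_ge0 as HC.
  apply Rminus_diag_uniq, (Rabs_le_geometric_eq0 _ (C * (1 + exp c))). intros n.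
  assert (Hn : 0 <= C * (/2) ^ n) by (apply Rmult_le_pos; [| apply pow_le]; lra).
  assert (Htail : Rabs (picard_lim x - picard_iter (S n) x) <= C * (/2) ^ S n)
    by apply picard_lim_spec.
  assert (Hstep : Rabs (picard (picard_iter n) x - picard picard_lim x)
                  <= C * (/2) ^ n / 2 * exp (c * clamp01 x)).
  { apply picard_contraction; [apply picard_iter_continuous | apply picard_lim_continuous |].
    intros y [Hy0 Hy1]. rewrite Rabs_minus_sym.
    assert (1 <= exp (c * y)) by (pose proof (exp_ineq1_le (c * y)); unfold c in *; nra).
    pose proof (proj2 (picard_lim_spec y) n). nra. }
  assert (Hexp : exp (c * clamp01 x) <= exp c)
    by (destruct (I01_clamp01 x); apply exp_le_compat; unfold c; nra).
  replace (picard_lim x - picard picard_lim x)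
    with ((picard_lim x - picard_iter (S n) x) + (picard (picard_iter n) x - picard picard_lim x))
    by (simpl; ring).
  eapply Rle_trans; [apply Rabs_triang |].
  replace (C * (/2) ^ S n) with (C * (/2) ^ n / 2) in Htail by (simpl; field).
  assert (C * (/2) ^ n / 2 * exp (c * clamp01 x) <= C * (/2) ^ n * exp c).
  { pose proof (exp_pos (c * clamp01 x)). nra. }
  nra.
Qed.

Lemma picard_lim_volterra_eq : volterra_eq b picard_lim.
Proof.
  intros x Hx. rewrite picard_lim_fixed at 1. unfold picard. rewrite clamp01_id; auto.
Qed.

End Picard.

Lemma ext01_lip f L : (forall x y, I01 x -> I01 y -> Rabs (f x - f y) <= L * Rabs (x - y)) ->
  forall x y, Rabs (ext01 f x - ext01 f y) <= L * Rabs (x - y).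
Proof.
  intros Hf x y.
  assert (HL : 0 <= L).
  { specialize (Hf 1 0 ltac:(red; lra) ltac:(red; lra)).
    rewrite Rminus_0_r, Rabs_R1, Rmult_1_r in Hf. pose proof (Rabs_pos (f 1 - f 0)). lra. }
  unfold ext01. eapply Rle_trans; [apply Hf; apply I01_clamp01 |].
  apply Rmult_le_compat_l; [exact HL | apply clamp01_lip].
Qed.

Lemma kernel_sol_exists beta : cont01 beta -> lip01 beta -> exists k, kernel_sol beta k.
Proof.
  intros Hc [L HL].
  pose proof (continuous_ext01 _ Hc) as Hbc.
  assert (Hbb : forall x, Rabs (ext01 beta x) <= supn beta)
    by (intros; unfold ext01; apply Rabs_le_supn; [exact Hc | apply I01_clamp01]).
  pose proof (ext01_lip _ _ HL) as Hbl.
  exists (picard_lim (ext01 beta)). split.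
  - apply continuous_cont01, (picard_lim_continuous _ _ _ Hbc Hbb Hbl).
  - apply (volterra_eq_agree (ext01 beta) beta _ _ (ext01_id beta) (fun _ _ => eq_refl)).
    apply (picard_lim_volterra_eq _ _ _ Hbc Hbb Hbl).
Qed.

Lemma Kop_kernel_sol beta : cont01 beta -> lip01 beta -> kernel_sol beta (Kop beta).
Proof. intros Hc Hl. unfold Kop. apply epsilon_spec, kernel_sol_exists; auto. Qed.

Lemma kernel_sol_diff b1 b2 k1 k2 B d K :
  kernel_sol b1 k1 -> kernel_sol b2 k2 -> cont01 b1 -> cont01 b2 ->
  (forall z, I01 z -> Rabs (b2 z) <= B) ->
  (forall z, I01 z -> Rabs (b1 z - b2 z) <= d) ->
  (forall z, I01 z -> Rabs (k1 z) <= K) ->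
  forall x, I01 x -> Rabs (k1 x - k2 x) <= d * (1 + K) * exp (B * x).
Proof.
  intros [Hk1 E1] [Hk2 E2] Hb1 Hb2 HB Hd HK x Hx.
  assert (Hext : forall f z, I01 z -> f z = ext01 f z) by (intros; symmetry; apply ext01_id; auto).
  rewrite (Hext k1 x Hx), (Hext k2 x Hx).
  apply (volterra_eq_diff (ext01 b1) (ext01 b2)); auto using continuous_ext01.
  - exact (volterra_eq_agree b1 _ k1 _ (Hext b1) (Hext k1) E1).
  - exact (volterra_eq_agree b2 _ k2 _ (Hext b2) (Hext k2) E2).
  - intros z Hz. rewrite <- Hext; auto.
  - intros z Hz. rewrite <- !Hext; auto.
  - intros z Hz. rewrite <- Hext; auto.
Qed.

Lemma kernel_sol_zero : kernel_sol (fun _ => 0) (fun _ => 0).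
Proof.
  split.
  - apply continuous_cont01. intros; apply continuous_const.
  - intros x _. rewrite RInt_Rconst. ring.
Qed.

Lemma kernel_sol_bound b k B : kernel_sol b k -> cont01 b ->
  (forall z, I01 z -> Rabs (b z) <= B) -> forall x, I01 x -> Rabs (k x) <= B * exp (B * x).
Proof.
  intros Hk Hb HB x Hx.
  (* compare with the zero solution of the zero kernel *)
  replace (Rabs (k x)) with (Rabs (0 - k x)) by (rewrite Rminus_0_l, Rabs_Ropp; reflexivity).
  replace (B * exp (B * x)) with (B * (1 + 0) * exp (B * x)) by ring.
  apply (kernel_sol_diff (fun _ => 0) b (fun _ => 0) k); auto.
  - apply kernel_sol_zero.
  - apply kernel_sol_zero.
  - intros z Hz. rewrite Rminus_0_l, Rabs_Ropp. auto.
  - intros; rewrite Rabs_R0; lra.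
Qed.

Lemma Kop_bound beta B : cont01 beta -> lip01 beta ->
  (forall z, I01 z -> Rabs (beta z) <= B) -> forall z, I01 z -> Rabs (Kop beta z) <= B * exp B.
Proof.
  intros Hc Hl HB z [Hz0 Hz1].
  pose proof (nonneg_of_Rabs_le _ _ HB) as HB0.
  eapply Rle_trans; [apply (kernel_sol_bound beta); auto using Kop_kernel_sol; red; lra |].
  apply Rmult_le_compat_l, exp_le_compat; nra.
Qed.

Lemma Kop_diff_bound beta1 beta2 B : cont01 beta1 -> cont01 beta2 -> lip01 beta1 -> lip01 beta2 ->
  (forall z, I01 z -> Rabs (beta1 z) <= B) -> (forall z, I01 z -> Rabs (beta2 z) <= B) ->
  forall z, I01 z ->
  Rabs (Kop beta1 z - Kop beta2 z) <= supn (fun x => beta1 x - beta2 x) * exp (3 * B).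
Proof.
  intros Cb1 Cb2 Lb1 Lb2 Hb1 Hb2 z [Hz0 Hz1].
  pose proof (Rabs_sub_le_supn _ _ _ Hb1 Hb2) as Hd.
  pose proof (nonneg_of_Rabs_le _ _ Hb1) as HB.
  pose proof (nonneg_of_Rabs_le _ _ Hd) as Hd0.
  set (d := supn (fun x => beta1 x - beta2 x)) in *.
  eapply Rle_trans.
  { apply (kernel_sol_diff beta1 beta2 _ _ B d (B * exp B)); auto using Kop_kernel_sol, Kop_bound.
    red; lra. }
  replace (3 * B) with (2 * B + B) by ring. rewrite exp_plus, <- Rmult_assoc.
  assert (0 <= B * exp B) by (pose proof (exp_pos B); nra).
  apply Rmult_le_compat; [apply Rmult_le_pos; lra | left; apply exp_pos | |].
  - apply Rmult_le_compat_l; [exact Hd0 | apply one_plus_mul_exp_le, HB].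
  - apply exp_le_compat. nra.
Qed.

Lemma ex_RInt_reflect_mult k u : cont01 k -> cont01 u -> ex_RInt (fun y => k (1 - y) * u y) 0 1.
Proof.
  intros Hk Hu.
  pose proof (continuous_ext01 _ Hk). pose proof (continuous_ext01 _ Hu).
  apply (ex_RInt_ext (fun y => ext01 k (1 - y) * ext01 u y)).
  - rewrite Rmin_left, Rmax_right by lra. intros y Hy.
    rewrite !ext01_id; auto; red; lra.
  - apply ex_RInt_continuous_R; solve_continuous.
Qed.

Lemma RInt_reflect_mult_diff_le (k1 k2 u1 u2 : R -> R) K Dk U Du :
  cont01 k1 -> cont01 k2 -> cont01 u1 -> cont01 u2 ->
  (forall z, I01 z -> Rabs (k1 z) <= K) -> (forall z, I01 z -> Rabs (k1 z - k2 z) <= Dk) ->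
  (forall z, I01 z -> Rabs (u2 z) <= U) -> (forall z, I01 z -> Rabs (u1 z - u2 z) <= Du) ->
  Rabs (RInt (fun y => k1 (1 - y) * u1 y) 0 1 - RInt (fun y => k2 (1 - y) * u2 y) 0 1)
    <= K * Du + Dk * U.
Proof.
  intros Ck1 Ck2 Cu1 Cu2 HK HDk HU HDu.
  rewrite <- RInt_Rminus by (apply ex_RInt_reflect_mult; assumption).
  replace (K * Du + Dk * U) with ((1 - 0) * (K * Du + Dk * U)) by ring.
  apply abs_RInt_le_const; [lra | apply ex_RInt_Rminus; apply ex_RInt_reflect_mult; assumption |].
  intros y Hy. assert (I01 (1 - y)) by (red; lra).
  replace (k1 (1 - y) * u1 y - k2 (1 - y) * u2 y)
    with (k1 (1 - y) * (u1 y - u2 y) + (k1 (1 - y) - k2 (1 - y)) * u2 y) by ring.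
  eapply Rle_trans; [apply Rabs_triang |]. rewrite !Rabs_mult.
  apply Rplus_le_compat; apply Rmult_le_compat; try apply Rabs_pos; auto.
Qed.

Theorem lemma4 (Bb Bu : R) (beta1 beta2 u1 u2 : R -> R) :
  0 < Bb -> 0 < Bu ->
  cont01 beta1 -> cont01 beta2 -> cont01 u1 -> cont01 u2 ->
  lip01 beta1 -> lip01 beta2 -> lip01 u1 -> lip01 u2 ->
  supn beta1 <= Bb -> supn beta2 <= Bb ->
  supn u1 <= Bu -> supn u2 <= Bu ->
  Rabs (Uop beta1 u1 - Uop beta2 u2) <=
    (Bb * exp Bb + Bu * exp (3 * Bb)) *
    Rmax (supn (fun x => beta1 x - beta2 x)) (supn (fun x => u1 x - u2 x)).
Proof.
  intros HBb HBu Cb1 Cb2 Cu1 Cu2 Lb1 Lb2 _ _ Sb1 Sb2 Su1 Su2.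
  pose proof (Rabs_le_of_supn_le _ _ Cb1 Sb1) as Hb1.
  pose proof (Rabs_le_of_supn_le _ _ Cb2 Sb2) as Hb2.
  pose proof (Rabs_le_of_supn_le _ _ Cu1 Su1) as Hu1.
  pose proof (Rabs_le_of_supn_le _ _ Cu2 Su2) as Hu2.
  set (db := supn (fun x => beta1 x - beta2 x)).
  set (du := supn (fun x => u1 x - u2 x)).
  unfold Uop. eapply Rle_trans.
  { apply (RInt_reflect_mult_diff_le _ _ _ _ (Bb * exp Bb) (db * exp (3 * Bb)) Bu du);
      auto.
    - exact (proj1 (Kop_kernel_sol beta1 Cb1 Lb1)).
    - exact (proj1 (Kop_kernel_sol beta2 Cb2 Lb2)).
    - apply Kop_bound; auto.
    - apply Kop_diff_bound; auto.
    - apply (Rabs_sub_le_supn _ _ _ Hu1 Hu2). }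
  pose proof (exp_pos Bb). pose proof (exp_pos (3 * Bb)).
  assert (Bb * exp Bb * du <= Bb * exp Bb * Rmax db du)
    by (apply Rmult_le_compat_l; [nra | apply Rmax_r]).
  assert (Bu * exp (3 * Bb) * db <= Bu * exp (3 * Bb) * Rmax db du)
    by (apply Rmult_le_compat_l; [nra | apply Rmax_l]).
  nra.
Qed.
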